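(* Let $G$ be a finite simple graph with no isolated vertices, and suppose $\mathrm{Aut}(G)$ contains an element $\sigma$ of order $2$ such that $\sigma(v_0)=v_0$ for exactly one vertex $v_0\in V(G)$, and $v\sigma(v)\notin E(G)$ for all $v\in V(G)$. Then $G$ is an $\mathcal{N}$ position for Grim.
   Context: Grim is a two-player game on a finite simple undirected graph. Any isolated vertices of the starting graph are deleted before play begins. Players alternate moves; a move consists of selecting a vertex of the current graph and deleting it together with all its incident edges, after which every vertex that has become isolated is also deleted. The player who makes the last legal move wins (a player facing the empty graph has no move and loses). A graph is an $\mathcal{N}$ position if the player about to move has a winning strategy, and a $\mathcal{P}$ position otherwise. An automorphism of $G$ is a permutation of $V(G)$ preserving adjacency. *)

From mathcomp Require Import all_boot all_fingroup.
Set Implicit Arguments. Unset Strict Implicit. Unset Printing Implicit Defensive.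

(* A finite simple graph is a symmetric irreflexive relation [e] on a finType [T].
   A Grim position is the induced subgraph on a vertex set [S : {set T}]
   that contains no isolated vertices. *)
Section Grim.
Variables (T : finType) (e : rel T).

Definition drop_isolated (S : {set T}) : {set T} :=
  [set v in S | [exists u in S, e v u]].

Definition grim_move (S : {set T}) (v : T) : {set T} :=
  drop_isolated (S :\ v).

(* [grim_win n S] : the player to move on position S wins, computed with
   recursion fuel n; it is correct whenever n >= #|S| (each move strictly
   decreases the number of vertices). *)
Fixpoint grim_win (n : nat) (S : {set T}) : bool :=
  match n with
  | 0 => false
  | n'.+1 => [exists v in S, ~~ grim_win n' (grim_move S v)]
  end.

Definition grim_N : bool := grim_win #|T| (drop_isolated [set: T]).

End Grim.

From mathcomp Require Import all_boot all_fingroup.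
Set Implicit Arguments. Unset Strict Implicit. Unset Printing Implicit Defensive.

(* Tweedledum-Tweedledee strategy.  The first player deletes the fixed vertex
   v0 and then answers every move v by s v.  The position after each of her
   moves is obtained from an s-stable vertex set without fixed points of s by
   dropping isolated vertices; since v and s v are never adjacent, deleting v
   leaves s v with a neighbour, so the answer s v is always legal, and it
   restores the invariant.  So the first player can always answer, and makes
   the last move. *)

Section Mirroring.
Variables (T : finType) (e : rel T).
Hypothesis e_sym : symmetric e.

Lemma drop_isolatedS (A : {set T}) : drop_isolated e A \subset A.
Proof. by apply/subsetP => x; rewrite inE => /andP []. Qed.

Lemma grim_move_drop_isolated (A : {set T}) v :
  grim_move e (drop_isolated e A) v = drop_isolated e (A :\ v).
Proof.
apply/setP => x; rewrite !inE.
case: (x =P v) => //= _; case xA: (x \in A) => //=.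
apply/andP/existsP => [[_ /existsP [u /andP [uD exu]]] | [u /andP [uD exu]]].
  by exists u; move: uD; rewrite !inE => /and3P [-> -> _].
move: uD; rewrite !inE => /andP [uv uA]; split.
  by apply/existsP; exists u; rewrite uA.
apply/existsP; exists u; rewrite !inE uv uA exu andbT.
by apply/existsP; exists x; rewrite xA e_sym.
Qed.

Variable s : {perm T}.
Hypothesis s_aut : forall x y : T, e (s x) (s y) = e x y.
Hypothesis s_invol : involutive s.
Hypothesis s_nonadj : forall v : T, ~~ e v (s v).

Definition s_stable (A : {set T}) := forall x, (s x \in A) = (x \in A).

Lemma s_stable_setD2 (A : {set T}) v : s_stable A -> s_stable (A :\ v :\ s v).
Proof.
move=> sA x; rewrite !inE sA (can_eq s_invol).
by rewrite (canF_eq s_invol) andbCA.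
Qed.

Lemma mirror_reply_legal (A : {set T}) v : s_stable A -> s v != v ->
  v \in drop_isolated e A -> s v \in grim_move e (drop_isolated e A) v.
Proof.
move=> sA svv; rewrite grim_move_drop_isolated !inE.
case/andP=> vA /existsP [u /andP [uA evu]].
rewrite svv sA vA /=; apply/existsP; exists (s u).
rewrite !inE sA uA s_aut evu !andbT; apply: contraNneq (s_nonadj v) => suv.
by move: evu; rewrite -suv s_invol.
Qed.

Lemma mirror_losing m (A : {set T}) : #|A| <= m -> s_stable A ->
  {in A, forall x, s x != x} -> ~~ grim_win e m (drop_isolated e A).
Proof.
elim/ltn_ind: m A => [[|m] IH] A // cardA sA sfree /=.
apply/negP => /existsP [v /andP [vD /negP]]; apply.
have vA : v \in A := subsetP (drop_isolatedS A) v vD.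
have svv := sfree v vA.
have cardA_eq : #|A| = #|A :\ v :\ s v|.+2.
  by rewrite (cardsD1 v A) (cardsD1 (s v) (A :\ v)) !inE svv sA vA.
case: m IH cardA => [|m] IH; rewrite cardA_eq // ltnS => cardA.
apply/existsP; exists (s v); rewrite mirror_reply_legal //=.
rewrite !grim_move_drop_isolated; apply: IH => //.
- exact: s_stable_setD2.
- by move=> x; rewrite !inE => /and3P [_ _ /sfree].
Qed.

End Mirroring.

Lemma perm_order2_involutive (T : finType) (s : {perm T}) :
  #[s]%g = 2 -> involutive s.
Proof.
move=> s2 x; have := expg_order s; rewrite s2 expgS expg1 => ss1.
by rewrite -permM ss1 perm1.
Qed.

Theorem corollary4p3 (T : finType) (e : rel T)
  (e_sym : symmetric e) (e_irr : irreflexive e)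
  (no_isolated : forall v : T, exists u : T, e v u)
  (s : {perm T})
  (s_aut : forall x y : T, e (s x) (s y) = e x y)
  (s_order2 : #[s]%g = 2)
  (s_one_fixed : exists! v0 : T, s v0 = v0)
  (s_nonadj : forall v : T, ~~ e v (s v)) :
  grim_N e.
Proof.
have s_invol := perm_order2_involutive s_order2.
have [v0 [sv0 v0_unique]] := s_one_fixed.
have cardT : #|T| = #|[set: T] :\ v0|.+1.
  by rewrite -cardsT (cardsD1 v0 [set: T]) inE.
rewrite /grim_N cardT /=; apply/existsP; exists v0.
have [u ev0u] := no_isolated v0.
rewrite inE in_setT; apply/andP; split.
  by apply/existsP; exists u; rewrite in_setT.
rewrite grim_move_drop_isolated //; apply: mirror_losing => //.
- by move=> x; rewrite !inE -{1}sv0 (can_eq s_invol).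
- move=> x; rewrite !inE andbT => xv0; apply: contraNneq xv0 => sx.
  by rewrite (v0_unique x sx).
Qed.
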